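(* Let $T$ be the BFS tree produced by temporal BFS on a temporal graph $G=(V,E)$ from source $s$ with starting time $t_s$. For every vertex $v\in V$, any two distinct occurrences of $v$ in $T$ have distinct levels.
   Context: A temporal graph is a pair $G=(V,E)$ where $V$ is a finite set of vertices and $E$ is a finite set of temporal edges, i.e. triples $(u,v,t)$ with $u,v\in V$, $u\neq v$, $t\in\mathbb{R}$ (the time at which the edge is active); distinct elements of $E$ are distinct triples. Fix $t_s\in\mathbb{R}$ and $s\in V$. Temporal BFS. Records are tuples $(x,d,\tau,p)$ (vertex $x$, level $d$, time $\tau$, predecessor record $p$ or none); every record ever created is an occurrence (node) of the BFS tree $T$, rooted at the initial record, with a tree edge from the predecessor record to the record; the level and time of an occurrence are the final values of its fields. For each $x\in V$ a current value $\sigma(x)$ is kept, initially $\infty$, and set to $\tau$ whenever a record of $x$ is created or its time is updated to $\tau$. Initially the FIFO queue $Q$ contains only $(s,0,t_s,\text{none})$ and $\sigma(s)=t_s$; no edge is traversed. While $Q\neq\emptyset$: pop the front record $R=(u,d_u,\sigma_u,p_u)$; let $B$ be the set of edges $(u,v,t)\in E$ not yet traversed with $\sigma_u\le t$; for each vertex $v$ such that $B$ contains an edge to $v$ (in any order), let $e=(u,v,t)$ be the edge of $B$ to $v$ with smallest $t$, mark $e$ traversed, and: (i) if $Q$ contains no record of $v$ and $\sigma(v)>t$, create $(v,d_u+1,t,R)$ and append it to $Q$; (ii) if $Q$ contains a record of $v$ with level $d_u+1$ and $\sigma(v)>t$, set that record's time to $t$ and predecessor to $R$; (iii) if $Q$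 contains a record of $v$ but none with level $d_u+1$, and $\sigma(v)>t$, create $(v,d_u+1,t,R)$ and append it to $Q$. *)

From Stdlib Require Import Reals List.
Import ListNotations.
Set Implicit Arguments.

Section TBFS.
Variable V : Type.

Record tedge := TEdge { esrc : V; edst : V; etime : R }.

Definition temporal_graph (E : list tedge) : Prop :=
  NoDup E /\ forall e, In e E -> esrc e <> edst e.

(* A record (x, d, tau, p); the predecessor is the index (position in the
   list of all records ever created) of the predecessor record. *)
Record trec := TRec { rv : V; rlev : nat; rtime : R; rpred : option nat }.

(* State of the algorithm:
   - recs  : all records ever created (the occurrences = nodes of T), by index;
   - queue : the FIFO queue Q, as a list of record indices (front first);
   - sigma : current values, None = infinity;
   - trav  : set of traversed edges;
   - cur   : None between pops; Some (k, B) while processing the popped record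
             of index k, where B is the set of edges of the initial B whose
             target has not yet been processed. *)
Record bstate := BState {
  recs  : list trec;
  queue : list nat;
  sigma : V -> option R;
  trav  : tedge -> Prop;
  cur   : option (nat * (tedge -> Prop)) }.

Definition sigma_gt (o : option R) (t : R) : Prop :=
  match o with None => True | Some x => (t < x)%R end.

Definition sigma_set (sg sg' : V -> option R) (v : V) (t : R) : Prop :=
  sg' v = Some t /\ forall x, x <> v -> sg' x = sg x.

Fixpoint set_nth (l : list trec) (j : nat) (r : trec) : list trec :=
  match l, j with
  | [], _ => []
  | _ :: l', 0 => r :: l'
  | a :: l', S j' => a :: set_nth l' j' r
  end.

Definition q_has (recs : list trec) (q : list nat) (v : V) : Prop :=
  exists j rj, In j q /\ nth_error recs j = Some rj /\ rv rj = v.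

Definition q_has_lev (recs : list trec) (q : list nat) (v : V) (d : nat) : Prop :=
  exists j rj, In j q /\ nth_error recs j = Some rj /\ rv rj = v /\ rlev rj = d.

Definition min_edge (B : tedge -> Prop) (e : tedge) : Prop :=
  B e /\ forall e', B e' -> edst e' = edst e -> (etime e <= etime e')%R.

Definition mark (tr : tedge -> Prop) (e : tedge) : tedge -> Prop :=
  fun x => tr x \/ x = e.

Definition drop_target (B : tedge -> Prop) (v : V) : tedge -> Prop :=
  fun x => B x /\ edst x <> v.

(* One step of temporal BFS (the inner "for each v" loop is executed one
   vertex at a time, in any order). *)
Inductive step (E : list tedge) : bstate -> bstate -> Prop :=
| st_pop : forall rs k q sg tr r,
    nth_error rs k = Some r ->
    step E (BState rs (k :: q) sg tr None)
      (BState rs q sg tr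
         (Some (k, fun e => In e E /\ esrc e = rv r /\ ~ tr e
                            /\ (rtime r <= etime e)%R)))
| st_done : forall rs q sg tr k B,
    (forall e, ~ B e) ->
    step E (BState rs q sg tr (Some (k, B))) (BState rs q sg tr None)
| st_create_i : forall rs q sg sg' tr k B r e,
    nth_error rs k = Some r -> min_edge B e ->
    ~ q_has rs q (edst e) ->
    sigma_gt (sg (edst e)) (etime e) ->
    sigma_set sg sg' (edst e) (etime e) ->
    step E (BState rs q sg tr (Some (k, B)))
      (BState (rs ++ [TRec (edst e) (S (rlev r)) (etime e) (Some k)])
              (q ++ [length rs]) sg' (mark tr e)
              (Some (k, drop_target B (edst e))))
| st_update_ii : forall rs q sg sg' tr k B r e j rj,
    nth_error rs k = Some r -> min_edge B e ->
    In j q -> nth_error rs j = Some rj -> rv rj = edst e ->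
    rlev rj = S (rlev r) ->
    sigma_gt (sg (edst e)) (etime e) ->
    sigma_set sg sg' (edst e) (etime e) ->
    step E (BState rs q sg tr (Some (k, B)))
      (BState (set_nth rs j (TRec (rv rj) (rlev rj) (etime e) (Some k)))
              q sg' (mark tr e)
              (Some (k, drop_target B (edst e))))
| st_create_iii : forall rs q sg sg' tr k B r e,
    nth_error rs k = Some r -> min_edge B e ->
    q_has rs q (edst e) ->
    ~ q_has_lev rs q (edst e) (S (rlev r)) ->
    sigma_gt (sg (edst e)) (etime e) ->
    sigma_set sg sg' (edst e) (etime e) ->
    step E (BState rs q sg tr (Some (k, B)))
      (BState (rs ++ [TRec (edst e) (S (rlev r)) (etime e) (Some k)])
              (q ++ [length rs]) sg' (mark tr e)
              (Some (k, drop_target B (edst e))))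
| st_skip : forall rs q sg tr k B e,
    min_edge B e ->
    ~ sigma_gt (sg (edst e)) (etime e) ->
    step E (BState rs q sg tr (Some (k, B)))
      (BState rs q sg (mark tr e) (Some (k, drop_target B (edst e)))).

Inductive reach (E : list tedge) : bstate -> bstate -> Prop :=
| reach_refl : forall st, reach E st st
| reach_step : forall st1 st2 st3, step E st1 st2 -> reach E st2 st3 -> reach E st1 st3.

Definition is_init (s : V) (ts : R) (st : bstate) : Prop :=
  recs st = [TRec s 0 ts None] /\ queue st = [0] /\
  sigma st s = Some ts /\ (forall x, x <> s -> sigma st x = None) /\
  (forall e, ~ trav st e) /\ cur st = None.

Definition is_final (st : bstate) : Prop := queue st = [] /\ cur st = None.

End TBFS.

From Stdlib Require Import Reals List Lia.
Import ListNotations.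

(* The proof is an invariant of the algorithm that only concerns the
   "shape" of the record list, i.e. the (vertex, level) pair of each
   record; times and predecessors are irrelevant.  Besides the statement
   itself (distinct records of a vertex have distinct levels), the
   invariant records the classical BFS layering: for some level L,
   - the queue consists of records of level L followed by records of
     level L+1,
   - every record that has left the queue has level at most L,
   - the record being processed has level L.
   A new record always gets level L+1 and is only created when no queued
   record of the same vertex has level L+1 (case (i): no queued record of
   the vertex at all; case (iii): none with level L+1); records outside
   the queue have level <= L, so the new pair (v, L+1) is fresh.  A pop
   either keeps L or, when the L-part of the queue is exhausted, moves to
   L+1.  Updates (case (ii)) change only time and predecessor, hence
   keep the shape. *)

Section SnocFacts.
Context {A : Type}.

Lemma nth_error_snoc_cases (l : list A) (b a : A) (j : nat) :
  nth_error (l ++ [b]) j = Some a -> nth_error l j = Some a \/ (j = length l /\ a = b).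
Proof.
  intros Hj. destruct (Nat.lt_ge_cases j (length l)) as [Hlt | Hge].
  - left. rewrite nth_error_app1 in Hj; auto.
  - right. rewrite nth_error_app2 in Hj by exact Hge.
    destruct (j - length l) as [|n] eqn:Hd; simpl in Hj.
    + split; [lia | congruence].
    + destruct n; discriminate.
Qed.

Lemma nth_error_snoc_old (l : list A) (b a : A) (j : nat) :
  nth_error l j = Some a -> nth_error (l ++ [b]) j = Some a.
Proof.
  intros Hj. rewrite nth_error_app1; auto.
  apply nth_error_Some. congruence.
Qed.

Lemma nth_error_snoc_last (l : list A) (b : A) :
  nth_error (l ++ [b]) (length l) = Some b.
Proof. rewrite nth_error_app2, Nat.sub_diag; reflexivity. Qed.

End SnocFacts.

Section Layers.
Context {V : Type}.

Definition shape (rs : list (trec V)) : list (V * nat) :=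
  map (fun r => (rv r, rlev r)) rs.

Lemma shape_set_nth (rs : list (trec V)) (j : nat) (rj r' : trec V) :
  nth_error rs j = Some rj -> rv r' = rv rj -> rlev r' = rlev rj ->
  shape (set_nth rs j r') = shape rs.
Proof.
  revert j. induction rs as [|a rs IH]; intros j Hj Hv Hl.
  - destruct j; discriminate.
  - destruct j as [|j]; simpl in *.
    + injection Hj as ->. unfold shape; simpl. rewrite Hv, Hl. reflexivity.
    + unfold shape in *; simpl. f_equal. apply (IH j); auto.
Qed.

Lemma shape_snoc (rs : list (trec V)) (r : trec V) :
  shape (rs ++ [r]) = shape rs ++ [(rv r, rlev r)].
Proof. unfold shape. rewrite map_app. reflexivity. Qed.

Lemma length_shape (rs : list (trec V)) : length (shape rs) = length rs.
Proof. apply length_map. Qed.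

Definition level_at (sh : list (V * nat)) (j d : nat) : Prop :=
  exists x, nth_error sh j = Some (x, d).

Definition distinct_levels (sh : list (V * nat)) : Prop :=
  forall i j x di dj, i <> j ->
    nth_error sh i = Some (x, di) -> nth_error sh j = Some (x, dj) -> di <> dj.

Record layered (sh : list (V * nat)) (q : list nat) (c : option nat) (L : nat)
  : Prop := {
  lay_queue : exists q1 q2, q = q1 ++ q2 /\
    (forall j, In j q1 -> level_at sh j L) /\
    (forall j, In j q2 -> level_at sh j (S L));
  lay_settled : forall j x d, nth_error sh j = Some (x, d) -> ~ In j q -> d <= L;
  lay_current : forall k, c = Some k -> level_at sh k L }.
Arguments lay_settled {sh q c L} _ j {x d}.
Arguments lay_current {sh q c L} _ {k}.

Lemma layered_pop {sh k q L} :
  layered sh (k :: q) None L -> exists L', layered sh q (Some k) L'.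
Proof.
  intros [[q1 [q2 [Hq [H1 H2]]]] Hset _].
  assert (Hleave : forall j x d, nth_error sh j = Some (x, d) -> ~ In j q ->
                     j = k \/ d <= L).
  { intros j x d Hj Hn. destruct (Nat.eq_dec j k) as [-> | Hne]; [left; auto |].
    right. apply (Hset j x); auto. intros [Hk | Hin]; [congruence | contradiction]. }
  destruct q1 as [|a q1]; simpl in Hq.
  - subst q2. destruct (H2 k (or_introl eq_refl)) as [y Hk].
    exists (S L). constructor.
    + exists q, []. rewrite app_nil_r. split; [reflexivity | split].
      * intros j Hj. apply H2. right; exact Hj.
      * intros j [].
    + intros j x d Hj Hn. destruct (Hleave j x d Hj Hn) as [-> | Hd]; [| lia].
      rewrite Hk in Hj. injection Hj as _ <-. lia.
    + intros k' Hk'. injection Hk' as <-. exists y; exact Hk.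
  - injection Hq as <- ->. destruct (H1 k (or_introl eq_refl)) as [y Hk].
    exists L. constructor.
    + exists q1, q2. split; [reflexivity | split; auto].
      intros j Hj. apply H1. right; exact Hj.
    + intros j x d Hj Hn. destruct (Hleave j x d Hj Hn) as [-> | Hd]; [| exact Hd].
      rewrite Hk in Hj. injection Hj as _ <-. lia.
    + intros k' Hk'. injection Hk' as <-. exists y; exact Hk.
Qed.

Lemma layered_done {sh q k L} :
  layered sh q (Some k) L -> layered sh q None L.
Proof. intros [Hq Hset _]. constructor; auto. discriminate. Qed.

Lemma layered_create sh q k L v :
  layered sh q (Some k) L ->
  layered (sh ++ [(v, S L)]) (q ++ [length sh]) (Some k) L.
Proof.
  intros [[q1 [q2 [Hq [H1 H2]]]] Hset Hcur].
  assert (Hold : forall j d, level_at sh j d -> level_at (sh ++ [(v, S L)]) j d).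
  { intros j d [x Hj]. exists x. apply nth_error_snoc_old; exact Hj. }
  constructor.
  - exists q1, (q2 ++ [length sh]). split; [rewrite Hq, app_assoc; reflexivity |].
    split; [auto |].
    intros j Hj. apply in_app_or in Hj as [Hj | [<- | []]]; auto.
    exists v. apply nth_error_snoc_last.
  - intros j x d Hj Hn. apply nth_error_snoc_cases in Hj as [Hj | [-> _]].
    + apply (Hset j x); auto. intro Hin. apply Hn, in_or_app; left; exact Hin.
    + exfalso. apply Hn, in_or_app. right; left; reflexivity.
  - intros k' Hk'. apply Hold, Hcur, Hk'.
Qed.

(* The new pair (v, L+1) is fresh as soon as no queued record is (v, L+1):
   queued records of level L+1 are excluded by hypothesis, and all others
   have level at most L. *)
Lemma distinct_create {sh q c L v} :
  layered sh q c L -> distinct_levels sh ->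
  (forall j, In j q -> nth_error sh j <> Some (v, S L)) ->
  distinct_levels (sh ++ [(v, S L)]).
Proof.
  intros Hlay Hdist Hfresh.
  assert (Hold : forall j d, nth_error sh j = Some (v, d) -> d <> S L).
  { intros j d Hj Hd. subst d. destruct (in_dec Nat.eq_dec j q) as [Hin | Hout].
    - exact (Hfresh j Hin Hj).
    - pose proof (lay_settled Hlay j Hj Hout). lia. }
  intros i j x di dj Hij Hi Hj.
  apply nth_error_snoc_cases in Hi as [Hi | [-> Ei]];
    apply nth_error_snoc_cases in Hj as [Hj | [-> Ej]].
  - exact (Hdist i j x di dj Hij Hi Hj).
  - injection Ej as -> ->. exact (Hold i di Hi).
  - injection Ei as -> ->. intro Hd. exact (Hold j dj Hj (eq_sym Hd)).
  - contradiction.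
Qed.

Definition bfs_inv (st : bstate V) : Prop :=
  (exists L, layered (shape (recs st)) (queue st) (option_map fst (cur st)) L) /\
  distinct_levels (shape (recs st)).

Lemma no_queued_level rs q v d :
  ~ q_has_lev rs q v d -> forall j, In j q -> nth_error (shape rs) j <> Some (v, d).
Proof.
  intros Hno j Hj Hsh. unfold shape in Hsh. rewrite nth_error_map in Hsh.
  destruct (nth_error rs j) as [rj|] eqn:Hrj; simpl in Hsh; [| discriminate].
  injection Hsh as Hv Hd. apply Hno. exists j, rj. auto.
Qed.

Lemma bfs_inv_create rs q sg sg' tr tr' k B B' r v t :
  bfs_inv (BState rs q sg tr (Some (k, B))) ->
  nth_error rs k = Some r -> ~ q_has_lev rs q v (S (rlev r)) ->
  bfs_inv (BState (rs ++ [TRec v (S (rlev r)) t (Some k)]) (q ++ [length rs])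
             sg' tr' (Some (k, B'))).
Proof.
  unfold bfs_inv; simpl. intros [[L Hlay] Hdist] Hk Hno.
  assert (HL : rlev r = L).
  { destruct (lay_current Hlay eq_refl) as [x Hx].
    unfold shape in Hx. rewrite nth_error_map, Hk in Hx. injection Hx as _ ->. reflexivity. }
  rewrite HL in *. rewrite shape_snoc; simpl. split.
  - exists L. rewrite <- (length_shape rs). apply layered_create; exact Hlay.
  - apply (distinct_create Hlay Hdist), no_queued_level, Hno.
Qed.

Lemma step_bfs_inv E st st' : step E st st' -> bfs_inv st -> bfs_inv st'.
Proof.
  intros Hstep HI. destruct Hstep.
  -
    destruct HI as [[L Hlay] Hdist]. split; [exact (layered_pop Hlay) | exact Hdist].
  -
    destruct HI as [[L Hlay] Hdist]. split; [exists L; exact (layered_done Hlay) | exact Hdist].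
  -
    eapply bfs_inv_create; [exact HI | exact H |].
    intros [j [rj [Hj [Hrj [Hv _]]]]]. apply H1. exists j, rj. auto.
  -
    unfold bfs_inv in *; simpl in *.
    rewrite (shape_set_nth rs j rj (TRec (rv rj) (rlev rj) (etime e) (Some k)) H2); auto.
  -
    eapply bfs_inv_create; [exact HI | exact H | exact H2].
  -
    exact HI.
Qed.

Lemma reach_bfs_inv {E st st'} : reach E st st' -> bfs_inv st -> bfs_inv st'.
Proof. induction 1; eauto using step_bfs_inv. Qed.

Lemma init_bfs_inv {s ts st} : is_init s ts st -> bfs_inv st.
Proof.
  intros [Hrs [Hq [_ [_ [_ Hc]]]]]. unfold bfs_inv.
  rewrite Hrs, Hq, Hc. simpl. split.
  - exists 0. constructor.
    + exists [0], []. split; [reflexivity | split].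
      * intros j [<- | []]. exists s. reflexivity.
      * intros j [].
    + intros [|[|j]] x d Hj Hn; simpl in Hj; try discriminate.
      exfalso. apply Hn. left; reflexivity.
    + discriminate.
  - intros [|[|i]] [|[|j]] x di dj Hij Hi Hj; simpl in *; congruence.
Qed.

End Layers.

Theorem lemma10 (V : Type) (Vfin : exists l : list V, forall x : V, In x l)
  (E : list (tedge V)) (HE : temporal_graph E) (s : V) (ts : R)
  (st0 st : bstate V) :
  is_init s ts st0 -> reach E st0 st -> is_final st ->
  forall (i j : nat) (ri rj : trec V),
    i <> j ->
    nth_error (recs st) i = Some ri ->
    nth_error (recs st) j = Some rj ->
    rv ri = rv rj ->
    rlev ri <> rlev rj.
Proof.
  intros Hinit Hreach _ i j ri rj Hij Hi Hj Hv.
  destruct (reach_bfs_inv Hreach (init_bfs_inv Hinit)) as [_ Hdist].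
  apply (Hdist i j (rv ri)); auto.
  - unfold shape. rewrite (map_nth_error _ _ _ Hi). reflexivity.
  - unfold shape. rewrite (map_nth_error _ _ _ Hj), Hv. reflexivity.
Qed.
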